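(* Let $d$ be such that $3d/4$ and $12d\mathcal{D}$ are integers, where $\mathcal{D}=\frac{\ln n}{\sqrt d}$. Let $a$ be a uniformly random regular point and $b$ a special point in $\{-\frac1{\sqrt d},\frac1{\sqrt d}\}^d$. For $d\ge8\ln^2n$, $\Pr[a^\top b>\frac14-6\mathcal{D}]\le\frac1{n^3}$ and $\Pr[a^\top b<\frac14-18\mathcal{D}]\le\frac1{n^3}$.
   Context: A point of $\{-\frac1{\sqrt d},\frac1{\sqrt d}\}^d$ is regular if it has exactly $\frac{3d}4$ coordinates equal to $\frac1{\sqrt d}$ and $\frac d4$ equal to $-\frac1{\sqrt d}$; it is special if it has exactly $\frac{3d}4-12d\mathcal{D}$ coordinates equal to $\frac1{\sqrt d}$ and $\frac d4+12d\mathcal{D}$ equal to $-\frac1{\sqrt d}$. *)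

From HB Require Import structures.
From mathcomp Require Import all_boot all_order all_algebra.
From mathcomp Require Import reals exp.
Set Implicit Arguments. Unset Strict Implicit. Unset Printing Implicit Defensive.
Import Order.TTheory GRing.Theory Num.Theory.
Local Open Scope ring_scope.

(* A point of {-1/sqrt d, 1/sqrt d}^d is encoded by its sign pattern
   s : {ffun 'I_d -> bool}; coordinate i is 1/sqrt d if s i, else -1/sqrt d. *)
Definition coord {R : realType} (d : nat) (s : {ffun 'I_d -> bool}) (i : 'I_d) : R :=
  if s i then 1 / Num.sqrt (d%:R) else - (1 / Num.sqrt (d%:R)).

Definition npos (d : nat) (s : {ffun 'I_d -> bool}) : nat := #|[set i | s i]|.
Definition nneg (d : nat) (s : {ffun 'I_d -> bool}) : nat := #|[set i | ~~ s i]|.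

Definition calD {R : realType} (n d : nat) : R := ln (n%:R) / Num.sqrt (d%:R).

Definition regular {R : realType} (d : nat) (s : {ffun 'I_d -> bool}) : bool :=
  ((npos s)%:R == 3 * d%:R / 4 :> R) && ((nneg s)%:R == d%:R / 4 :> R).

Definition special {R : realType} (n d : nat) (s : {ffun 'I_d -> bool}) : bool :=
  ((npos s)%:R == 3 * d%:R / 4 - 12 * d%:R * calD n d :> R) &&
  ((nneg s)%:R == d%:R / 4 + 12 * d%:R * calD n d :> R).

Definition dotp {R : realType} (d : nat) (a b : {ffun 'I_d -> bool}) : R :=
  \sum_(i < d) coord a i * coord b i.

Definition prob_regular {R : realType} (d : nat) (P : {ffun 'I_d -> bool} -> bool) : R :=
  #|[set a | @regular R d a && P a]|%:R / #|[set a | @regular R d a]|%:R.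

From Pilot Require Import Defs.
From HB Require Import structures.
From mathcomp Require Import all_boot all_order all_algebra.
From mathcomp Require Import reals sequences exp.
From mathcomp Require Import zify ring lra.
Set Implicit Arguments. Unset Strict Implicit. Unset Printing Implicit Defensive.
Import Order.TTheory GRing.Theory Num.Theory.

(* Identify a regular point a with the set S of its d/4 negative coordinates and let B
   be the set of negative coordinates of b. Then a^T b is affine in the hypergeometric
   count X = |S :&: B|, whose mean is (d/4)(1/4 + 12 D). Its factorial moments are
   dominated by the binomial ones, so E[(1+y)^X] <= (1 + y |B|/d)^(d/4); with
   y = e^l - 1 and the Bernoulli estimate p e^l + 1 - p <= exp(p l + 0.43 l^2) for
   l <= 3/8, Markov's inequality at l = 6 D bounds both tails by exp(-5.13 ln^2 n),
   which is at most n^-3 because ln n is either 0 or larger than ln 2 > 3/5. *)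

Lemma leq_bin_mul_exp (m n j : nat) : m <= n -> 'C(m, j) * n ^ j <= 'C(n, j) * m ^ j.
Proof.
move=> le_mn; elim: j => [|j IHj]; first by rewrite !bin0.
rewrite -(@leq_pmul2l j.+1) // !mulnA !mul_bin_left !expnS.
have le_step : (m - j) * n <= (n - j) * m by nia.
have := leq_mul le_step IHj.
by rewrite -!mulnA (mulnCA n) (mulnCA m) !mulnA.
Qed.

Section Draws.
Variable T : finType.

Lemma card_draws_supset (J : {set T}) k : #|J| <= k ->
  #|[set S : {set T} | (#|S| == k) && (J \subset S)]| = 'C(#|T| - #|J|, k - #|J|).
Proof.
move=> le_Jk.
have cardJC : #|~: J| = #|T| - #|J| by rewrite -(cardsC J) addKn.
rewrite -cardJC -cards_draws.
have -> : [set S : {set T} | (#|S| == k) && (J \subset S)] =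
   (fun A => A :|: J) @: [set A : {set T} | A \subset ~: J & #|A| == k - #|J|].
  apply/setP => S; rewrite inE; apply/idP/imsetP.
  - case/andP => /eqP cardS sJS; exists (S :\: J).
      by rewrite inE subsetDr /= cardsD cardS (setIidPr sJS).
    by rewrite setUC -{1}(setID S J) (setIidPr sJS).
  - case=> A; rewrite inE => /andP [sAJC /eqP cardA] ->.
    rewrite subsetUr andbT cardsU cardA.
    suff -> : A :&: J = set0 by rewrite cards0 subn0 subnK.
    by apply/eqP; rewrite setI_eq0 disjoints_subset.
have dropJ (A : {set T}) : A \subset ~: J -> (A :|: J) :\: J = A.
  by rewrite -disjoints_subset => /setDidPl dAJ; rewrite setDUl setDv setU0 dAJ.
rewrite card_in_imset // => A1 A2; rewrite !inE => /andP [sA1 _] /andP [sA2 _] eqU.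
by rewrite -(dropJ A1 sA1) eqU dropJ.
Qed.

Lemma sum_bin_card_setI (B : {set T}) k j : j <= k ->
  \sum_(S : {set T} | #|S| == k) 'C(#|S :&: B|, j) = 'C(#|B|, j) * 'C(#|T| - j, k - j).
Proof.
move=> le_jk.
rewrite (eq_bigr (fun S => \sum_(J : {set T} | (J \subset S :&: B) && (#|J| == j)) 1));
  last by move=> S _; rewrite sum1dep_card cards_draws.
rewrite (exchange_big_dep (fun J : {set T} => (J \subset B) && (#|J| == j))) /=; last first.
  by move=> S J _; rewrite subsetI => /andP [/andP [_ ->] ->].
rewrite (eq_bigr (fun _ => 'C(#|T| - j, k - j))).
  by rewrite sum_nat_cond_const cards_draws.
move=> J /andP [sJB /eqP cardJ].
rewrite (eq_bigl (fun S : {set T} => (#|S| == k) && (J \subset S))).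
  by rewrite sum1dep_card card_draws_supset cardJ.
by move=> S; rewrite subsetI sJB cardJ eqxx !andbT.
Qed.

End Draws.

Lemma bin_mul_bin n k j : j <= k -> 'C(n, k) * 'C(k, j) = 'C(n, j) * 'C(n - j, k - j).
Proof.
move=> le_jk; have := sum_bin_card_setI [set: 'I_n] le_jk.
rewrite cardsT card_ord => <-.
rewrite (eq_bigr (fun _ => 'C(k, j))); last by move=> S /eqP cardS; rewrite setIT cardS.
by rewrite sum_nat_cond_const -[in 'C(n, k)](card_ord n) card_draws.
Qed.

Local Open Scope ring_scope.

Lemma binomial_widen (R : comNzRingType) (y : R) z k : (z <= k)%N ->
  (y + 1) ^+ z = \sum_(i < k.+1) y ^+ i *+ 'C(z, i).
Proof.
move=> le_zk; rewrite exprD1n (big_ord_widen k.+1 (fun i => y ^+ i *+ 'C(z, i))) //.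
rewrite big_mkcond /=; apply: eq_bigr => i _.
by case: ifP => // /negbT; rewrite -leqNgt => lt_zi; rewrite bin_small.
Qed.

(* The factorial moments of the hypergeometric |S :&: B| are dominated by the
   binomial ones, so its generating function is dominated termwise. *)
Lemma sum_exp_card_setI_le (R : realFieldType) (T : finType) (B : {set T}) k (y : R) :
  0 <= y -> (0 < #|T|)%N ->
  \sum_(S : {set T} | #|S| == k) (y + 1) ^+ #|S :&: B| <=
  'C(#|T|, k)%:R * (y * #|B|%:R / #|T|%:R + 1) ^+ k.
Proof.
move=> y_ge0 T_gt0.
rewrite (eq_bigr (fun S => \sum_(i < k.+1) y ^+ i *+ 'C(#|S :&: B|, i))); last first.
  by move=> S /eqP <-; apply: binomial_widen; apply/subset_leq_card/subsetIl.
rewrite exchange_big exprD1n big_distrr /=; apply: ler_sum => i _.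
have le_ik : (i <= k)%N by rewrite -ltnS.
rewrite sumrMnr sum_bin_card_setI //.
set N := 'C(#|T| - i, k - i).
have le_nat : ('C(#|B|, i) * N * #|T| ^ i <= 'C(#|T|, k) * 'C(k, i) * #|B| ^ i)%N.
  rewrite bin_mul_bin // -mulnA (mulnC N) mulnA -[X in (_ <= X)%N]mulnA (mulnC N) mulnA.
  by rewrite leq_mul2r leq_bin_mul_exp ?max_card ?orbT.
have Ti_gt0 : 0 < #|T|%:R ^+ i :> R by rewrite exprn_gt0 // ltr0n.
have -> : 'C(#|T|, k)%:R * ((y * #|B|%:R / #|T|%:R) ^+ i *+ 'C(k, i)) =
   y ^+ i * (('C(#|T|, k) * 'C(k, i) * #|B| ^ i)%N%:R / #|T|%:R ^+ i) :> R.
  by rewrite -mulr_natr !natrM natrX !exprMn exprVn; field; rewrite gt_eqF.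
rewrite -[X in X <= _]mulr_natr; apply: ler_wpM2l; first by rewrite exprn_ge0.
by rewrite ler_pdivlMr // -natrX -natrM ler_nat.
Qed.

Lemma mix_poly_ineq (R : realFieldType) (p l : R) : 0 <= p <= 1 -> 0 <= l <= 3/8 ->
  (1 - p) * (1 - (1 - p) * l) <=
  (1 + p * l) * ((1 + 43/100 * l ^+ 2) * (1 - (1 - p) * l) - p).
Proof.
move=> /andP [p_ge0 p_le1] /andP [l_ge0 l_le].
have pq_le : p * (1 - p) <= 1/4 by have := sqr_ge0 (p - 1/2); nra.
have : 43/100 * ((1 + p * l) * (1 - (1 - p) * l)) - p * (1 - p) >= 0.
  have : (1 + p * l) * (1 - (1 - p) * l) >= 1 - l - l ^+ 2 / 4 by nra.
  nra.
nra.
Qed.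

(* With [q = 1 - p]: multiply through by [expR (- q l) >= 1 - q l] and use
   [1 + p l <= expR (p l)]; what remains is [mix_poly_ineq]. *)
Lemma expR_mix_le (R : realType) (p l : R) : 0 <= p <= 1 -> 0 <= l <= 3/8 ->
  (expR l - 1) * p + 1 <= expR (p * l + 43/100 * l ^+ 2).
Proof.
move=> p01 l01; have /andP [p_ge0 p_le1] := p01; have /andP [l_ge0 l_le] := l01.
set q := 1 - p.
have expR_split : expR l = expR (p * l) * expR (q * l) by rewrite -expRD /q; congr expR; ring.
set E := expR (p * l); set V := expR (q * l).
have E_ge : 1 + p * l <= E by exact: expR_ge1Dx.
have E_ge0 : 0 <= E by exact: expR_ge0.
have V_ge0 : 0 <= V by exact: expR_ge0.
have V_le : V * (1 - q * l) <= 1.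
  have := ler_wpM2l V_ge0 (expR_ge1Dx (- (q * l))).
  rewrite /V -expRD subrr expR0; lra.
have ql_lt1 : 0 < 1 - q * l by rewrite /q; nra.
have poly := mix_poly_ineq p01 l01.
rewrite expRD expR_split -/E.
apply: (@le_trans _ _ (E * (1 + 43/100 * l ^+ 2))); last exact/ler_wpM2l/expR_ge1Dx.
rewrite -(@ler_pM2r _ (1 - q * l)) //.
have : p * E * (V * (1 - q * l)) <= p * E * 1 by apply: ler_wpM2l => //; exact: mulr_ge0.
have rest_ge0 : 0 <= (1 + 43/100 * l ^+ 2) * (1 - q * l) - p.
  have -> : (1 + 43/100 * l ^+ 2) * (1 - q * l) - p =
            (1 - p) * (1 - l) + 43/100 * (l ^+ 2 * (1 - q * l)) by rewrite /q; ring.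
  have : 0 <= (1 - p) * (1 - l) by apply: mulr_ge0; lra.
  have : 0 <= l ^+ 2 * (1 - q * l) by apply: mulr_ge0; [exact: sqr_ge0 | lra].
  lra.
have := ler_wpM2r rest_ge0 E_ge.
have -> : ((E * V - 1) * p + 1) * (1 - q * l) =
          p * E * (V * (1 - q * l)) + (1 - p) * (1 - q * l) by rewrite /q; ring.
rewrite /q in poly *; nra.
Qed.

Lemma card_setI_tail_le (R : realType) (T : finType) (B : {set T}) k (l z : R)
    (P : {set T} -> bool) :
  0 <= l <= 3/8 -> (0 < #|T|)%N ->
  (forall S : {set T}, #|S| == k -> P S -> z <= #|S :&: B|%:R) ->
  #|[set S : {set T} | (#|S| == k) && P S]|%:R <=
  'C(#|T|, k)%:R * expR (k%:R * ((#|B|%:R / #|T|%:R) * l + 43/100 * l ^+ 2) - l * z).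
Proof.
move=> l01 T_gt0 PS_ge; have /andP [l_ge0 _] := l01.
set p := #|B|%:R / #|T|%:R.
have p01 : 0 <= p <= 1.
  rewrite divr_ge0 //= ler_pdivrMr ?ltr0n // mul1r ler_nat; exact: max_card.
have markov : #|[set S : {set T} | (#|S| == k) && P S]|%:R * expR (l * z) <=
    \sum_(S : {set T} | #|S| == k) ((expR l - 1) + 1) ^+ #|S :&: B|.
  rewrite -sum1dep_card natr_sum big_distrl /=.
  rewrite (bigID P (fun S : {set T} => #|S| == k)) /=.
  apply: ler_wpDr; first by apply: sumr_ge0 => S _; rewrite exprn_ge0 // subrK expR_ge0.
  apply: ler_sum => S /andP [cardS PS]; rewrite mul1r subrK -expRM_natl ler_expR.
  by rewrite [_ * l]mulrC ler_wpM2l // PS_ge.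
have y_ge0 : 0 <= expR l - 1 by rewrite subr_ge0 -expR0 ler_expR.
have mgf_le : ((expR l - 1) * #|B|%:R / #|T|%:R + 1) ^+ k <=
              expR (k%:R * (p * l + 43/100 * l ^+ 2)).
  rewrite expRM_natl -mulrA -/p; have /andP [p_ge0 _] := p01.
  apply: lerXn2r; last exact: expR_mix_le.
    by rewrite nnegrE addr_ge0 // mulr_ge0.
  by rewrite nnegrE expR_ge0.
have := le_trans markov (le_trans (sum_exp_card_setI_le B k y_ge0 T_gt0)
                                  (ler_wpM2l (ler0n _ _) mgf_le)).
by rewrite expRB mulrA ler_pdivlMr ?expR_gt0.
Qed.

Definition neg_point d (S : {set 'I_d}) : {ffun 'I_d -> bool} := [ffun i => i \notin S].

Lemma neg_point_inj d : injective (@neg_point d).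
Proof.
move=> S1 S2 eqS; apply/setP => i.
by have := congr1 (fun a : {ffun 'I_d -> bool} => a i) eqS; rewrite !ffunE => /negb_inj.
Qed.

Lemma nneg_neg_point d (S : {set 'I_d}) : nneg (neg_point S) = #|S|.
Proof. by apply: eq_card => i; rewrite !inE ffunE negbK. Qed.

Lemma npos_neg_point d (S : {set 'I_d}) : npos (neg_point S) = (d - #|S|)%N.
Proof.
have cardSC := cardsC S; rewrite card_ord in cardSC.
rewrite /npos -[X in _ = (X - _)%N]cardSC addKn.
by apply: eq_card => i; rewrite !inE ffunE.
Qed.

Lemma regular_neg_point (R : realType) d k (S : {set 'I_d}) : k%:R = d%:R / 4 :> R ->
  @regular R d (neg_point S) = (#|S| == k).
Proof.
move=> k_quarter.
have le_kd : (k <= d)%N by rewrite -(ler_nat R) k_quarter; have := ler0n R d; lra.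
rewrite /regular; have -> : 3 * d%:R / 4 = (d - k)%N%:R :> R by rewrite natrB // k_quarter; field.
rewrite nneg_neg_point npos_neg_point -k_quarter !eqr_nat.
by apply/andP/idP => [[_ ->] // | /eqP ->].
Qed.

Lemma card_regular (R : realType) d k (P : {ffun 'I_d -> bool} -> bool) :
  k%:R = d%:R / 4 :> R ->
  #|[set a | @regular R d a && P a]| = #|[set S : {set 'I_d} | (#|S| == k) && P (neg_point S)]|.
Proof.
move=> k_quarter; rewrite -(card_imset _ (@neg_point_inj d)).
apply: eq_card => a; rewrite inE; apply/idP/imsetP.
- move=> /andP [reg_a Pa].
  have negsK : neg_point [set i | ~~ a i] = a by apply/ffunP => i; rewrite ffunE inE negbK.
  by exists [set i | ~~ a i]; rewrite // inE -(regular_neg_point _ k_quarter) negsK reg_a.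
- by case=> S; rewrite inE => /andP [cardS PS] ->; rewrite (regular_neg_point _ k_quarter) cardS.
Qed.

Lemma dotp_neg_point (R : realType) d (S : {set 'I_d}) (b : {ffun 'I_d -> bool}) :
  (0 < d)%N ->
  @dotp R d (neg_point S) b = (d%:R - 2 * #|S|%:R - 2 * #|[set i | ~~ b i]|%:R
                               + 4 * #|S :&: [set i | ~~ b i]|%:R) / d%:R.
Proof.
move=> d_gt0.
have sqrt_d : Num.sqrt d%:R ^+ 2 = d%:R :> R by rewrite sqr_sqrtr.
have sqrt_d_neq0 : Num.sqrt d%:R != 0 :> R by rewrite sqrtr_eq0 -ltNge ltr0n.
have sum_indicator (A : {set 'I_d}) : \sum_(i < d) (i \in A)%:R = #|A|%:R :> R.
  rewrite -sum1_card natr_sum [RHS]big_mkcond /=.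
  by apply: eq_bigr => i _; case: (i \in A).
rewrite /dotp (eq_bigr (fun i => (1 - 2 * (i \in S)%:R - 2 * (i \in [set i | ~~ b i])%:R
                                  + 4 * (i \in S :&: [set i | ~~ b i])%:R) / d%:R)).
  rewrite -big_distrl /= !big_split /= !sumrN -!big_distrr /= !sum_indicator.
  by rewrite sumr_const card_ord.
move=> i _; rewrite /Defs.coord /neg_point ffunE !inE.
set r := Num.sqrt d%:R in sqrt_d sqrt_d_neq0 *.
by case: (i \in S); case: (b i); rewrite /= ?mulr1n ?mulr0n -sqrt_d; field.
Qed.

Lemma prob_regular_le (R : realType) d k (B : {set 'I_d}) (P : {ffun 'I_d -> bool} -> bool)
    (l z : R) :
  (0 < d)%N -> k%:R = d%:R / 4 :> R -> 0 <= l <= 3/8 ->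
  (forall S : {set 'I_d}, #|S| == k -> P (neg_point S) -> z <= #|S :&: B|%:R) ->
  @prob_regular R d P <= expR (d%:R / 4 * (#|B|%:R / d%:R * l + 43/100 * l ^+ 2) - l * z).
Proof.
move=> d_gt0 k_quarter l01 tail.
have T_gt0 : (0 < #|'I_d|)%N by rewrite card_ord.
have := card_setI_tail_le l01 T_gt0 tail; rewrite card_ord k_quarter => count_le.
have all_regular : #|[set a | @regular R d a]| = 'C(d, k).
  transitivity #|[set a | @regular R d a && true]|.
    by apply: eq_card => a; rewrite !inE andbT.
  rewrite (card_regular _ k_quarter) -[X in 'C(X, k)](card_ord d) -card_draws.
  by apply: eq_card => S; rewrite !inE andbT.
rewrite /prob_regular all_regular (card_regular _ k_quarter).
have le_kd : (k <= d)%N by rewrite -(ler_nat R) k_quarter; have := ler0n R d; lra.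
by rewrite ler_pdivrMr ?ltr0n ?bin_gt0 // mulrC.
Qed.

(* [expR (3/20) <= 20/17] from [1 - 3/20 <= expR (-3/20)], then raise to the 4th power. *)
Lemma ln2_ge (R : realType) : 3/5 <= ln (2 : R).
Proof.
have e_gt0 : 0 < expR (3/20) :> R by exact: expR_gt0.
have e_le : expR (3/20) * (17/20) <= 1 :> R.
  have := ler_wpM2l (ltW e_gt0) (expR_ge1Dx (- (3/20) : R)).
  rewrite expRxMexpNx_1; lra.
have : expR (3/5) <= 2 :> R.
  have -> : (3/5 : R) = 4%:R * (3/20) by rewrite -[4%:R]/(4 : R); field.
  rewrite expRM_natl; set x := expR (3/20) in e_gt0 e_le *.
  have x_le : x <= 20/17 by lra.
  have x2_le : x ^+ 2 <= 400/289 by rewrite expr2; nra.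
  have -> : x ^+ 4 = x ^+ 2 * x ^+ 2 by rewrite -exprD.
  have := sqr_ge0 x; nra.
by rewrite -ler_ln ?posrE ?expR_gt0 // expRK.
Qed.

Lemma ln_nat_eq0_or_ge (R : realType) n : (0 < n)%N ->
  ln (n%:R : R) = 0 \/ 3/5 <= ln (n%:R : R).
Proof.
case: n => // -[|n] _; first by left; rewrite ln1.
right; apply: (le_trans (ln2_ge R)).
by rewrite ler_ln ?posrE ?ltr0n // -[2]/(2%:R : R) ler_nat.
Qed.

Section SpecialPoint.
Variables (R : realType) (n d : nat) (b : {ffun 'I_d -> bool}).
Hypotheses (n_gt0 : (0 < n)%N) (d_gt0 : (0 < d)%N) (b_special : @special R n d b).

Local Notation D := (@calD R n d).
Local Notation L := (ln (n%:R : R)).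
Let B := [set i : 'I_d | ~~ b i].

Lemma calD_ge0 : 0 <= D.
Proof. by rewrite divr_ge0 ?sqrtr_ge0 // ln_ge0 // ler1n. Qed.

Lemma d_mul_calD_sqr : d%:R * D ^+ 2 = L ^+ 2.
Proof.
rewrite /calD expr_div_n sqr_sqrtr ?ler0n // mulrC divfK //.
by rewrite pnatr_eq0 -lt0n.
Qed.

Lemma card_negs_special : #|B|%:R = d%:R / 4 + 12 * d%:R * D.
Proof. by move: b_special => /andP [_ /eqP <-]. Qed.

Lemma card_pos_special : #|~: B|%:R = 3 * d%:R / 4 - 12 * d%:R * D.
Proof.
have := cardsC B; rewrite card_ord => /(congr1 (fun m => m%:R : R)).
rewrite natrD card_negs_special; lra.
Qed.

Lemma calD_le : D <= 1/16.
Proof.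
have : #|B|%:R <= d%:R :> R by rewrite ler_nat -[X in (_ <= X)%N](card_ord d) max_card.
have := calD_ge0; have : 0 < d%:R :> R by rewrite ltr0n.
rewrite card_negs_special; nra.
Qed.

(* [513/100 = 9 * (1 - 43/100)] is the exponent produced by [l = 6 D]; it beats [3 / ln n]
   because [ln n] is either 0 or at least [ln 2 > 3/5]. *)
Lemma expR_le_inv_cube x : x <= - (513/100) * (d%:R * D ^+ 2) -> expR x <= 1 / n%:R ^+ 3.
Proof.
rewrite d_mul_calD_sqr => x_le.
have -> : 1 / n%:R ^+ 3 = expR (- (3 * L)) :> R.
  by rewrite expRN -[3 : R]/(3%:R) expRM_natl lnK ?posrE ?ltr0n // div1r.
rewrite ler_expR; apply: (le_trans x_le).
by case: (ln_nat_eq0_or_ge R n_gt0) => [-> | ln_ge]; [lra | nra].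
Qed.

Variable k : nat.
Hypothesis k_quarter : k%:R = d%:R / 4 :> R.

Lemma dotp_special (S : {set 'I_d}) : #|S| == k ->
  @dotp R d (neg_point S) b = (4 * #|S :&: B|%:R - 24 * d%:R * D) / d%:R.
Proof.
move=> /eqP cardS; rewrite dotp_neg_point // -/B cardS k_quarter card_negs_special.
congr (_ / _); lra.
Qed.

Lemma six_calD_bounds : 0 <= 6 * D <= 3/8.
Proof. by have := calD_le; have := calD_ge0; lra. Qed.

Lemma prob_dotp_gt : @prob_regular R d (fun a => @dotp R d a b > 1/4 - 6 * D) <= 1 / n%:R ^+ 3.
Proof.
have d_pos : 0 < d%:R :> R by rewrite ltr0n.
apply: (le_trans (prob_regular_le (B := B) (z := d%:R / 16 + 9/2 * d%:R * D)
                   d_gt0 k_quarter six_calD_bounds _)).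
  move=> S cardS; rewrite dotp_special // ltr_pdivlMr //; lra.
apply: expR_le_inv_cube; rewrite card_negs_special le_eqVlt; apply/orP; left.
by apply/eqP; field; rewrite gt_eqF.
Qed.

Lemma prob_dotp_lt : @prob_regular R d (fun a => @dotp R d a b < 1/4 - 18 * D) <= 1 / n%:R ^+ 3.
Proof.
have d_pos : 0 < d%:R :> R by rewrite ltr0n.
apply: (le_trans (prob_regular_le (B := ~: B) (z := 3 * d%:R / 16 - 3/2 * d%:R * D)
                   d_gt0 k_quarter six_calD_bounds _)).
  move=> S cardS; rewrite dotp_special // ltr_pdivrMr // => dot_lt.
  have := cardsID B S; rewrite setDE => /(congr1 (fun m => m%:R : R)).
  by rewrite natrD (eqP cardS) k_quarter; lra.
apply: expR_le_inv_cube; rewrite card_pos_special le_eqVlt; apply/orP; left.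
by apply/eqP; field; rewrite gt_eqF.
Qed.

End SpecialPoint.

Unset Implicit Arguments.

Theorem mainTheorem20 (R : realType) (n d : nat) (b : {ffun 'I_d -> bool}) :
  (0 < n)%N -> (0 < d)%N ->
  (exists k : nat, k%:R = 3 * d%:R / 4 :> R) ->
  (exists m : int, m%:~R = 12 * d%:R * @calD R n d :> R) ->
  @special R n d b ->
  8 * ln (n%:R : R) ^+ 2 <= d%:R ->
  @prob_regular R d (fun a => @dotp R d a b > 1 / 4 - 6 * @calD R n d) <= 1 / (n%:R ^+ 3) /\
  @prob_regular R d (fun a => @dotp R d a b < 1 / 4 - 18 * @calD R n d) <= 1 / (n%:R ^+ 3).
Proof.
move=> n_gt0 d_gt0 [k3 k3_def] _ b_special _.
have le_k3d : (k3 <= d)%N by rewrite -(ler_nat R) k3_def; have := ler0n R d; lra.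
have k_quarter : (d - k3)%N%:R = d%:R / 4 :> R by rewrite natrB // k3_def; field.
split; [exact: prob_dotp_gt k_quarter | exact: prob_dotp_lt k_quarter].
Qed.
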